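(* Let $m>n$ be positive integers. (a) There is a functor $F:\mathfrak T_{iso}\to\mathfrak S([X\times\mathbb Z])$ such that for $\alpha\in\Delta_{iso}$, $F(\alpha)=\{[\lambda,j]: j\in\mathbb Z,\ \lambda\in X_{\nu^j\alpha}\}$ and $F(\rho_\alpha)[\lambda,j]=[t_{\nu^j\alpha}(\lambda),j]$ for $\lambda\in X_{\nu^j\alpha}$. (b) There is a functor $B:\mathfrak T_{iso}\to\mathfrak S([\mathcal B^\circ\times\mathbb Z])$ such that for $\alpha\in\Delta_{iso}$, $B(\alpha)=\{[\mathfrak b,j]: j\in\mathbb Z,\ \mathfrak b\in\mathcal B^\circ(\nu^j\alpha)\}$ and $B(\rho_\alpha)[\mathfrak b,j]=[r_{\nu^j\alpha}(\mathfrak b),j]$ for $\mathfrak b\in\mathcal B^\circ(\nu^j\alpha)$. (c) The map $[\zeta(\sigma),k]\mapsto[\mathfrak b^\circ(\sigma),k]$ is a well-defined bijection $[X\times\mathbb Z]\to[\mathcal B^\circ\times\mathbb Z]$ which carries $F(\alpha)$ onto $B(\alpha)$ and intertwines $F(\rho_\alpha)$ with $B(\rho_\alpha)$ for every $\alpha\in\Delta_{iso}$.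
   Context: Roots: $\Delta_1^+=\{\epsilon_i-\delta_j\}$, $\Delta_{iso}=\pm\Delta_1^+$; $\nu(\pm(\epsilon_i-\delta_j))=\pm(\epsilon_{i+1}-\delta_j)$ with $\epsilon$-indices mod $n$ in $\{1,\dots,n\}$. $\mathfrak T_{iso}$: groupoid with objects $\Delta_{iso}$ and non-identity morphisms $\rho_\alpha:\alpha\to-\alpha$; $\mathfrak S(V)$: groupoid of subsets of $V$ and bijections between them. Young diagrams: $X$ = partitions $\lambda=(\lambda_1\ge\dots\ge\lambda_n\ge0)$, $\lambda_1\le m$, drawn in an $n\times m$ rectangle with rows $\epsilon_1,\dots,\epsilon_n$ top to bottom and columns $\delta_1,\dots,\delta_m$; $\lambda$ consists of boxes $\epsilon_i-\delta_j$ with $j\le\lambda_{n+1-i}$. For $\alpha\in\Delta_1^+$, $X_\alpha$ (resp. $X_{-\alpha}$) is the set of $\lambda$ for which box $\alpha$ is an outer (resp. inner) corner, $t_\alpha$ adds and $t_{-\alpha}$ removes that box. For $\lambda_1=m$, $\overline\lambda=(\lambda_2,\dots,\lambda_n,0)$. $[X\times\mathbb Z]$ is the set of classes of the smallest equivalence relation with $(\lambda,k)\sim(\overline\lambda,k+1)$ whenever $\lambda_1=m$. Shuffles and Borels: $I=\{1,\dots,n,1',\dots,m'\}$, $\epsilon_{j'}:=\delta_j$; a shuffle is a permutation $\sigma$ of $I$ whose one-line notation $(\sigma(1),\dots,\sigma(n),\sigma(1'),\dots,\sigma(m'))$ has $1,\dots,n$ and $1',\dots,m'$ as increasing subsequences.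 $\mathfrak b^\circ(\sigma)$ is the Borel subalgebra of $\mathfrak{gl}(n|m)$ containing the diagonal matrices whose simple roots are $\epsilon_{u}-\epsilon_{v}$ for consecutive entries $u,v$ of the one-line notation; $\mathcal B^\circ=\{\mathfrak b^\circ(\sigma)\}$. $\zeta(\sigma)\in X$: the boxes below the lattice path from top-left to bottom-right whose $k$-th step is down if the $k$-th entry of $\sigma$ is unprimed and right otherwise ($\zeta$ is a bijection). For $\alpha=\epsilon_i-\delta_j$, $\mathcal B^\circ(\alpha)$ (resp. $\mathcal B^\circ(-\alpha)$) is the set of $\mathfrak b^\circ(\sigma)$ in which $i$ immediately precedes (resp. follows) $j'$, and $r_{\pm\alpha}(\mathfrak b^\circ(\sigma))=\mathfrak b^\circ((i,j')\sigma)$ (interchange $i,j'$; this is the odd reflection). For $\sigma$ with last entry $n$, $\overline\sigma$ has one-line notation $1$ followed by $\nu^{-1}$ applied to the first $m+n-1$ entries of $\sigma$, where $\nu^{-1}(k)=k+1$ ($k<n$), $\nu^{-1}(n)=1$, $\nu^{-1}$ fixes primed entries. $[\mathcal B^\circ\times\mathbb Z]$ is the set of classes of the smallest equivalence relation with $(\mathfrak b^\circ(\sigma),k)\sim(\mathfrak b^\circ(\overline\sigma),k+1)$ whenever $\sigma$ has last entry $n$. *)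

From HB Require Import structures.
From mathcomp Require Import all_boot all_order all_algebra.
From mathcomp Require Import perm algC.
From Stdlib Require Import Relations.Relation_Operators.

Set Implicit Arguments.
Unset Strict Implicit.
Unset Printing Implicit Defensive.
Import GRing.Theory Num.Theory.

Section CorDefs.
Variables n m : nat.

(* Isotropic roots  +-(eps_(i+1) - delta_(j+1))  (0-based i : 'I_n, j : 'I_m);
   rsign = true for the positive isoroot eps - delta.                       *)
Record isoroot := Root { rsign : bool; ri : 'I_n; rj : 'I_m }.

Definition ropp (a : isoroot) : isoroot := Root (~~ rsign a) (ri a) (rj a).

Definition nu (a : isoroot) : isoroot := Root (rsign a) (ordS (ri a)) (rj a).
Definition nuinv (a : isoroot) : isoroot := Root (rsign a) (ord_pred (ri a)) (rj a).

Definition nupow (k : int) (a : isoroot) : isoroot :=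
  match k with
  | Posz k => iter k nu a
  | Negz k => iter k.+1 nuinv a
  end.

(* Young diagrams: lambda = (lambda_1 >= ... >= lambda_n >= 0), lambda_1 <= m,
   stored as the sequence [:: lambda_1; ...; lambda_n].                  *)
Definition isPart (l : seq nat) : bool :=
  (size l == n) && sorted geq l && all (fun x => x <= m) l.

Definition Xt := {l : seq nat | isPart l}.

(* lambda_k, 1-based *)
Definition lam (l : seq nat) (k : nat) : nat := nth 0 l k.-1.

(* box eps_(i+1) - delta_(j+1) belongs to lambda iff j+1 <= lambda_(n+1-(i+1)) *)
Definition inbox (l : Xt) (i : 'I_n) (j : 'I_m) : Prop :=
  j.+1 <= lam (val l) (n + 1 - i.+1).

Definition outer (l : Xt) (i : 'I_n) (j : 'I_m) : Prop :=
  ~ inbox l i j /\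
  exists mu : Xt, forall i' j', inbox mu i' j' <-> (inbox l i' j' \/ (i' = i /\ j' = j)).

Definition inner (l : Xt) (i : 'I_n) (j : 'I_m) : Prop :=
  inbox l i j /\
  exists mu : Xt, forall i' j', inbox mu i' j' <-> (inbox l i' j' /\ ~ (i' = i /\ j' = j)).

Definition Xa (a : isoroot) (l : Xt) : Prop :=
  if rsign a then outer l (ri a) (rj a) else inner l (ri a) (rj a).

(* t_alpha: add (alpha positive) / remove (alpha negative) the box |alpha|,
   i.e. set lambda_(n+1-(i+1)) to j+1 (resp. j).  (Only used on X_alpha.) *)
Definition tX (a : isoroot) (l : Xt) : Xt :=
  insubd l (set_nth 0 (val l) (n - (ri a).+1)
                    (if rsign a then (rj a).+1 else (rj a : nat))).

Definition Xbar (l : Xt) : Xt := insubd l (rcons (behead (val l)) 0).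

Definition stepX (p q : Xt * int) : Prop :=
  lam (val p.1) 1 = m /\ q = (Xbar p.1, (p.2 + 1)%R).

Definition XZeq : Xt * int -> Xt * int -> Prop :=
  clos_refl_sym_trans (Xt * int) stepX.

Definition QX := {c : Xt * int -> Prop | exists x, c = XZeq x}.
Definition clsX (x : Xt * int) : QX := exist _ (XZeq x) (ex_intro _ x erefl).

(* I = {1..n,1'..m'} is encoded by 'I_(n+m): unprimed k <-> k-1,
   primed j' <-> n+j-1; positions 1..n,1'..m' of the one-line notation are
   encoded the same way, so a permutation is f : position -> value.      *)
Definition isShuffle (f : {ffun 'I_(n + m) -> 'I_(n + m)}) : bool :=
  injectiveb f &&
  [forall p : 'I_(n + m), forall q : 'I_(n + m), (p < q) ==>
      (((f p < n) && (f q < n)) || ((n <= f p) && (n <= f q))) ==> (f p < f q)].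

Definition Shuf := {f : {ffun 'I_(n + m) -> 'I_(n + m)} | isShuffle f}.

Definition unpr (i : 'I_n) : 'I_(n + m) := lshift m i.
Definition pri (j : 'I_m) : 'I_(n + m) := rshift n j.

Definition before (s : Shuf) (u v : 'I_(n + m)) : bool :=
  [exists p : 'I_(n + m), exists q : 'I_(n + m), (p < q) && (val s p == u) && (val s q == v)].

Definition imm (s : Shuf) (u v : 'I_(n + m)) : bool :=
  [exists p : 'I_(n + m), exists q : 'I_(n + m),
     (val q == (val p).+1) && (val s p == u) && (val s q == v)].

(* b^o(s): the Borel subalgebra of gl(n|m) (over algC) containing the diagonal
   matrices, whose positive roots are eps_u - eps_v for u before v in s,
   i.e. the matrices A with A u v = 0 unless u = v or u precedes v.     *)
Definition borel (s : Shuf) : 'M[algC]_(n + m) -> bool :=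
  fun A => [forall u, forall v, (A u v != 0%R) ==> (u == v) || before s u v].

Definition Bor := {b : 'M[algC]_(n + m) -> bool | exists s, b = borel s}.
Definition bo (s : Shuf) : Bor := exist _ (borel s) (ex_intro _ s erefl).

Definition Ba (a : isoroot) (s : Shuf) : bool :=
  if rsign a then imm s (unpr (ri a)) (pri (rj a))
  else imm s (pri (rj a)) (unpr (ri a)).

Definition swapS (a : isoroot) (s : Shuf) : Shuf :=
  insubd s [ffun p => tperm (unpr (ri a)) (pri (rj a)) (val s p)].

Definition nuinvI (x : 'I_(n + m)) : 'I_(n + m) :=
  match split x with inl i => unpr (ordS i) | inr j => pri j end.

Definition lastn (s : Shuf) : bool :=
  [exists p : 'I_(n + m), (val p == (n + m).-1) && (val (val s p) == n.-1)].

Lemma pred_ord_lt (p : 'I_(n + m)) : p.-1 < n + m.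
Proof. exact: leq_ltn_trans (leq_pred p) (ltn_ord p). Qed.

(* s bar: one-line notation 1 followed by nu^{-1} applied to the first
   m+n-1 entries of s. (Position 0 has value 0 = the unprimed 1.) *)
Definition sbar (s : Shuf) : Shuf :=
  insubd s [ffun p : 'I_(n + m) =>
              if val p == 0 then p else nuinvI (val s (Ordinal (pred_ord_lt p)))].

Definition stepB (p q : Bor * int) : Prop :=
  exists s, lastn s /\ p.1 = bo s /\ q = (bo (sbar s), (p.2 + 1)%R).

Definition BZeq : Bor * int -> Bor * int -> Prop :=
  clos_refl_sym_trans (Bor * int) stepB.

Definition QB := {c : Bor * int -> Prop | exists x, c = BZeq x}.
Definition clsB (x : Bor * int) : QB := exist _ (BZeq x) (ex_intro _ x erefl).

(* zeta(s): lambda_(n+1-i) = number of primed entries before the unprimed i *)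
Lemma isPart0 : isPart (nseq n 0).
Proof.
rewrite /isPart size_nseq eqxx /=.
apply/andP; split; last by apply/allP=> x /nseqP [-> _].
by elim: n => [|[|k] IH] //=.
Qed.

Definition X0 : Xt := exist _ (nseq n 0) isPart0.

Definition zetaseq (s : Shuf) : seq nat :=
  [seq #|[pred v : 'I_(n + m) | (n <= v) &&
           [exists p : 'I_(n + m), exists q : 'I_(n + m), (p < q) && (val s p == v)
                                 && (val (val s q) == n - k.+1)]]|
  | k <- iota 0 n].

Definition zeta (s : Shuf) : Xt := insubd X0 (zetaseq s).

End CorDefs.

From mathcomp Require Import all_boot all_order all_algebra.
From mathcomp Require Import perm algC zify.
From Stdlib Require Import Relations.Relation_Operators ClassicalEpsilon
  FunctionalExtensionality PropExtensionality ProofIrrelevance.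

Set Implicit Arguments.
Unset Strict Implicit.
Unset Printing Implicit Defensive.
Import GRing.Theory.

(* The row of the unprimed letter [i] in [zeta s] has as many boxes as there are
   primed letters before [i] in [s].  These row lengths determine the relative
   order of any two letters, so [zeta] is injective; it is onto by induction on
   the number of boxes.  Under [zeta], "[i] immediately precedes (follows) [j']"
   becomes "the box (i, j) is an outer (inner) corner", the odd reflection
   swapping [i] and [j'] becomes adding (removing) that box, and [s |-> sbar s]
   becomes [lambda |-> lambda bar].
   A class of [X x Z] is a chain (lambda, k), (lambda bar, k + 1), ... along
   which the first row of each diagram but the last one is full.  Passing from
   one diagram of the chain to the next turns a corner [alpha] outside the top
   row into the corner [nu alpha] and commutes with [t], while if [alpha] lies
   in the full top row, then [nu alpha] is not a corner of the next diagram and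
   the chain stops there.  Hence [t_(nu^j alpha)] respects the equivalence,
   which gives [F]; [B] is obtained by transporting [F] along the bijection
   induced by [zeta]. *)

Lemma card_ord_ltn m t : t <= m -> #|[pred j : 'I_m | j < t]| = t.
Proof.
elim: t => [|t IH] Ht; first by apply: eq_card0 => j; rewrite inE.
rewrite (cardD1 (Ordinal Ht)) inE /= ltnSn add1n -{3}(IH (ltnW Ht)).
congr _.+1; apply: eq_card => j; rewrite !inE -val_eqE /= ltnS leq_eqVlt.
by case: ltngtP.
Qed.

Lemma downclosed_ord_card m (A : pred 'I_m) :
  (forall j j' : 'I_m, j' <= j -> A j -> A j') -> forall j, A j = (j < #|A|).
Proof.
move=> Adown j; apply/idP/idP => Aj.
  have sub : [pred j' : 'I_m | j' < j.+1] \subset A.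
    by apply/subsetP => j'; rewrite inE ltnS => /Adown; apply.
  by have := subset_leq_card sub; rewrite card_ord_ltn.
apply/negP => notAj.
have sub : A \subset [pred j' : 'I_m | j' < j].
  apply/subsetP => j' Aj'; rewrite inE ltnNge; apply/negP => le_jj'.
  by move: notAj; rewrite (Adown _ _ le_jj' Aj').
by have := subset_leq_card sub; rewrite card_ord_ltn ?(ltnW (ltn_ord j)) // leqNgt Aj.
Qed.

Lemma eq_from_ord_ltn m a b :
  (forall j : 'I_m, (j < a) = (j < b)) -> a <= m -> b <= m -> a = b.
Proof.
move=> Eab am bm; case: (ltngtP a b) => // lt.
  by have := Eab (Ordinal (leq_trans lt bm)); rewrite /= ltnn lt.
by have := Eab (Ordinal (leq_trans lt am)); rewrite /= ltnn lt.
Qed.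

Lemma ord_pred_val n (i : 'I_n) : (i : nat) != 0 -> (ord_pred i : nat) = i.-1.
Proof.
move=> ne; have lti := ltn_ord i; rewrite /=.
by rewrite -subn1 -addnBAC ?lt0n // modnDr modn_small //; lia.
Qed.

Lemma ordS_val n (i : 'I_n) : i.+1 < n -> (ordS i : nat) = i.+1.
Proof. exact: modn_small. Qed.

Section GraphClosure.
Variables (T : Type) (R : T -> T -> Prop) (g : pred T) (f : T -> T).
Hypothesis R_graph : forall x y, R x y <-> g x /\ y = f x.
Hypothesis f_inj : forall x y, g x -> g y -> f x = f y -> x = y.
Local Notation rst := (clos_refl_sym_trans T R).

Definition chain x k := forall i, i < k -> g (iter i f x).

Lemma chainS x k : chain x k.+1 -> g x /\ chain (f x) k.
Proof. by move=> c; split=> [|i ik]; [apply: (c 0)|rewrite -iterSr; apply: c]. Qed.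

Lemma chain_cat x a b : chain x a -> chain (iter a f x) b -> chain x (b + a).
Proof.
move=> ca cb i ib; case: (ltnP i a) => ia; first exact: ca.
by have := cb (i - a) ltac:(lia); rewrite -iterD subnK.
Qed.

Lemma chain_drop x a b : chain x (b + a) -> chain (iter a f x) b.
Proof. by move=> c i ib; rewrite -iterD; apply: c; lia. Qed.

Lemma chain_take x a b : a <= b -> chain x b -> chain x a.
Proof. by move=> ab c i ia; apply: c; lia. Qed.

Lemma chain_inj a x y : chain x a -> chain y a -> iter a f x = iter a f y -> x = y.
Proof.
elim: a x y => [//|a IH] x y /chainS [gx cx] /chainS [gy cy]; rewrite !iterSr => E.
by apply: f_inj => //; apply: IH.
Qed.

Definition linked x y :=
  exists k, (chain x k /\ y = iter k f x) \/ (chain y k /\ x = iter k f y).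

Lemma linked_trans x y z : linked x y -> linked y z -> linked x z.
Proof.
case=> a [[ca ->]|[ca ->]]; case=> b [[cb ->]|[cb Ey]].
- by exists (b + a); left; rewrite iterD; split=> //; apply: chain_cat.
- case: (leqP a b) => ab.
    have Eb : b = a + (b - a) by lia.
    move: cb Ey; rewrite Eb iterD => cb /(chain_inj ca (chain_drop cb)) ->.
    by exists (b - a); right; split=> //; apply: chain_take cb; lia.
  have Ea : a = b + (a - b) by lia.
  move: ca Ey; rewrite Ea iterD => ca /(chain_inj (chain_drop ca) cb) <-.
  by exists (a - b); left; split=> //; apply: chain_take ca; lia.
- case: (leqP a b) => ab.
    have Eb : b = (b - a) + a by lia.
    exists (b - a); left; rewrite -iterD -Eb; split=> //.
    by apply: chain_drop; rewrite -Eb.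
  have Ea : a = (a - b) + b by lia.
  exists (a - b); right; rewrite -iterD -Ea; split=> //.
  by apply: chain_drop; rewrite -Ea.
- by exists (a + b); right; rewrite Ey -iterD; split=> //; apply: chain_cat; rewrite -?Ey.
Qed.

Lemma rst_linked x y : rst x y -> linked x y.
Proof.
elim=> {x y} [x y /R_graph [gx ->]|x|x y _ [k c]|x y z _ lxy _ lyz].
- by exists 1; left; split=> // i; rewrite ltnS leqn0 => /eqP ->.
- by exists 0; left.
- by exists k; case: c => c; [right|left].
- exact: linked_trans lxy lyz.
Qed.

Variables (A : T -> Prop) (t : T -> T).
Hypothesis t_step : forall x, g x -> A x -> A (f x) -> R (t x) (t (f x)).
Hypothesis A_next : forall x, g x -> g (f x) -> A x -> A (f x).

Lemma rst_map_chain k x : A x -> chain x k -> A (iter k f x) -> rst (t x) (t (iter k f x)).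
Proof.
elim: k x => [|k IH] x Ax; first by move=> *; apply: rst_refl.
move=> /chainS [gx cx]; rewrite iterSr => Ak.
have Afx : A (f x) by case: k {IH} cx Ak => [//|k] /chainS [gfx _] _; apply: A_next.
exact: (@rst_trans _ _ _ (t (f x))) (rst_step _ _ _ _ (t_step gx Ax Afx)) (IH _ Afx cx Ak).
Qed.

Lemma rst_map x y : A x -> A y -> rst x y -> rst (t x) (t y).
Proof.
move=> Ax Ay /rst_linked [k [[c Ey]|[c Ex]]]; subst.
  exact: rst_map_chain.
by apply: rst_sym; apply: rst_map_chain.
Qed.

End GraphClosure.

Section ImageSig.
Variables (A B : Type) (f : A -> B).
Local Notation img := {y : B | exists x, y = f x}.

Definition img_of x : img := exist _ (f x) (ex_intro _ x erefl).

Definition img_pick (y : img) : A :=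
  proj1_sig (constructive_indefinite_description _ (proj2_sig y)).

Lemma img_pickK y : img_of (img_pick y) = y.
Proof.
rewrite /img_pick; case: constructive_indefinite_description => x Ex /=.
by case: y Ex => y hy /= Ex; apply: subset_eq_compat.
Qed.

Lemma img_of_eq x x' : f x = f x' -> img_of x = img_of x'.
Proof. by move=> E; apply: subset_eq_compat. Qed.

Lemma eq_img_of x x' : img_of x = img_of x' -> f x = f x'.
Proof. by move/(f_equal (@proj1_sig _ _)). Qed.

End ImageSig.

Lemma rst_class (T : Type) (R : T -> T -> Prop) x y :
  clos_refl_sym_trans T R x y -> clos_refl_sym_trans T R x = clos_refl_sym_trans T R y.
Proof.
move=> xy; apply: functional_extensionality => z; apply: propositional_extensionality.
by split=> [|yz]; [apply: rst_trans; apply: rst_sym|apply: rst_trans yz].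
Qed.

Section Shuffles.
Variables n m : nat.
Local Notation N := (n + m).
Implicit Types s : Shuf n m.

Definition sametype (u v : 'I_N) := ((u < n) && (v < n)) || ((n <= u) && (n <= v)).

Lemma sametypeC u v : sametype u v = sametype v u.
Proof. by rewrite /sametype andbC [(n <= v) && _]andbC. Qed.

Lemma sametype_unpr (i i' : 'I_n) : sametype (unpr m i) (unpr m i').
Proof. by rewrite /sametype /= !ltn_ord. Qed.

Lemma sametype_pri (j j' : 'I_m) : sametype (pri n j) (pri n j').
Proof. by rewrite /sametype /= !leq_addr orbT. Qed.

Lemma sametype_unpr_pri (i : 'I_n) (j : 'I_m) : sametype (unpr m i) (pri n j) = false.
Proof. by apply/negbTE; rewrite /sametype /=; have := ltn_ord i; lia. Qed.

Lemma unpr_neq_pri (i : 'I_n) (j : 'I_m) : unpr m i != pri n j.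
Proof. by rewrite -val_eqE /= neq_ltn (leq_trans (ltn_ord i)) ?leq_addr. Qed.

Lemma unpr_or_pri (v : 'I_N) : (exists i, v = unpr m i) \/ (exists j, v = pri n j).
Proof.
case: (splitP v) => [i|j] Ev; [left; exists i|right; exists j]; exact: val_inj.
Qed.

Lemma shuf_inj s : injective (val s).
Proof. by case: s => f /= /andP [/injectiveP]. Qed.

Lemma shuf_ltn s (p q : 'I_N) :
  p < q -> sametype (val s p) (val s q) -> val s p < val s q.
Proof.
case: s => f /= /andP [_ /forallP f_mono] pq st.
by have /forallP/(_ q) := f_mono p; rewrite pq -/(sametype (f p) (f q)) st.
Qed.

Definition pos s : 'I_N -> 'I_N := invF (@shuf_inj s).

Lemma posK s : cancel (pos s) (val s). Proof. exact: f_invF. Qed.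
Lemma shufK s : cancel (val s) (pos s). Proof. exact: invF_f. Qed.
Lemma pos_inj s : injective (pos s). Proof. exact: can_inj (@posK s). Qed.

Lemma pos_ltn s u v : sametype u v -> (pos s u < pos s v) = (u < v).
Proof.
have mono u' v' : sametype u' v' -> u' < v' -> pos s u' < pos s v'.
  move=> st lt; case: (ltngtP (pos s u') (pos s v')) => // [gt|/val_inj/pos_inj E].
    by have := shuf_ltn (s := s) gt; rewrite !posK sametypeC st ltnNge ltnW //; apply.
  by rewrite E ltnn in lt.
move=> st; apply/idP/idP; last exact: mono.
move=> lt; case: (ltngtP u v) => // [gt|/val_inj E]; last by rewrite E ltnn in lt.
by have := mono _ _ (etrans (sametypeC _ _) st) gt; rewrite ltnNge ltnW.
Qed.

Lemma pos_leq s u v : sametype u v -> (pos s u <= pos s v) = (u <= v).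
Proof. by move=> st; rewrite leqNgt pos_ltn 1?sametypeC // -leqNgt. Qed.

Lemma pos_unpr_ltn s (i i' : 'I_n) : (pos s (unpr m i) < pos s (unpr m i')) = (i < i').
Proof. by rewrite pos_ltn ?sametype_unpr. Qed.
Lemma pos_pri_ltn s (j j' : 'I_m) : (pos s (pri n j) < pos s (pri n j')) = (j < j').
Proof. by rewrite pos_ltn ?sametype_pri //= ltn_add2l. Qed.
Lemma pos_unpr_leq s (i i' : 'I_n) : (pos s (unpr m i) <= pos s (unpr m i')) = (i <= i').
Proof. by rewrite pos_leq ?sametype_unpr. Qed.
Lemma pos_pri_leq s (j j' : 'I_m) : (pos s (pri n j) <= pos s (pri n j')) = (j <= j').
Proof. by rewrite pos_leq ?sametype_pri //= leq_add2l. Qed.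

Lemma pos_unpr_neq s (i : 'I_n) (j : 'I_m) : (pos s (unpr m i) : nat) != pos s (pri n j).
Proof. by rewrite val_eqE (inj_eq (@pos_inj s)) unpr_neq_pri. Qed.

Lemma pos_surj s (p : nat) : p < N ->
  (exists i, pos s (unpr m i) = p :> nat) \/ (exists j, pos s (pri n j) = p :> nat).
Proof.
move=> pN; case: (unpr_or_pri (val s (Ordinal pN))) => [[i E]|[j E]];
  [left; exists i|right; exists j]; by rewrite -E shufK.
Qed.

Lemma beforeE s u v : before s u v = (pos s u < pos s v).
Proof.
apply/existsP/idP => [[p /existsP [q /andP [/andP [pq /eqP <-] /eqP <-]]]|lt].
  by rewrite !shufK.
by exists (pos s u); apply/existsP; exists (pos s v); rewrite !posK !eqxx lt.
Qed.

Lemma immE s u v : imm s u v = ((pos s v : nat) == (pos s u).+1).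
Proof.
apply/existsP/idP => [[p /existsP [q /andP [/andP [pq /eqP <-] /eqP <-]]]|E].
  by rewrite !shufK.
by exists (pos s u); apply/existsP; exists (pos s v); rewrite !posK !eqxx E.
Qed.

Lemma pos_card s v : (pos s v : nat) = #|[pred u | pos s u < pos s v]|.
Proof.
rewrite -[LHS](card_ord_ltn (ltnW (ltn_ord (pos s v)))) -(card_image (@shuf_inj s)).
apply: eq_card => u; rewrite inE; apply/imageP/idP => [[p pv ->]|uv].
  by rewrite shufK.
by exists (pos s u); rewrite ?posK.
Qed.

Lemma before_inj s s' : before s =2 before s' -> s = s'.
Proof.
move=> Ebefore; have Epos v : pos s v = pos s' v.
  apply: ord_inj; rewrite (pos_card s) (pos_card s').
  by apply: eq_card => u; rewrite !inE -!beforeE.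
apply: val_inj; apply/ffunP => p.
by apply: (@pos_inj s); rewrite shufK Epos shufK.
Qed.

Lemma isShuffle_of_pos (g : {ffun 'I_N -> 'I_N}) (h : 'I_N -> nat) :
  (forall p, h (g p) = p) ->
  (forall u v, sametype u v -> u < v -> h u < h v) -> isShuffle g.
Proof.
move=> hgK h_mono; apply/andP; split.
  by apply/injectiveP => p q E; apply: ord_inj; rewrite -hgK E hgK.
apply/forallP => p; apply/forallP => q; apply/implyP => pq; apply/implyP => st.
case: ltngtP => // [gt|/val_inj E]; last by move: pq; rewrite -(hgK p) E hgK ltnn.
by have := h_mono _ _ (etrans (sametypeC _ _) st) gt; rewrite !hgK ltnNge ltnW.
Qed.

Lemma pos_of_cancel s (h : 'I_N -> nat) :
  (forall p, h (val s p) = p) -> forall v, (pos s v : nat) = h v.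
Proof. by move=> hK v; rewrite -{2}(posK s v) hK. Qed.

Definition row s (i : 'I_n) := #|[pred j : 'I_m | pos s (pri n j) < pos s (unpr m i)]|.

Lemma row_leq s i : row s i <= m.
Proof. by rewrite /row (leq_trans (max_card _)) // card_ord. Qed.

Lemma row_ltn s i (j : 'I_m) : (pos s (pri n j) < pos s (unpr m i)) = (j < row s i).
Proof.
apply: (downclosed_ord_card (A := [pred j | pos s (pri n j) < pos s (unpr m i)])).
by move=> a b ba /=; apply: leq_ltn_trans; rewrite pos_pri_leq.
Qed.

Lemma pos_unpr_pri_ltn s i (j : 'I_m) : (pos s (unpr m i) < pos s (pri n j)) = (row s i <= j).
Proof.
by rewrite [row s i <= j]leqNgt -row_ltn; have := pos_unpr_neq s i j; lia.
Qed.

Lemma row_mono s (i i' : 'I_n) : i <= i' -> row s i <= row s i'.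
Proof.
move=> ii'; apply: subset_leq_card; apply/subsetP => j; rewrite !inE => lt.
by apply: leq_trans lt _; rewrite pos_unpr_leq.
Qed.

Lemma before_rows s s' : row s =1 row s' -> before s =2 before s'.
Proof.
move=> Erow u v; rewrite !beforeE.
case: (unpr_or_pri u) => [[i ->]|[j ->]]; case: (unpr_or_pri v) => [[i' ->]|[j' ->]].
- by rewrite !pos_unpr_ltn.
- by rewrite !pos_unpr_pri_ltn Erow.
- by rewrite !row_ltn Erow.
- by rewrite !pos_pri_ltn.
Qed.

Lemma card_primed (P : pred 'I_N) :
  #|[pred v : 'I_N | (n <= v) && P v]| = #|[pred j : 'I_m | P (pri n j)]|.
Proof.
rewrite -(card_image (@rshift_inj n m)); apply: eq_card => v; rewrite !inE.
apply/andP/imageP => [[nv Pv]|[j Pj ->]]; last by rewrite /= leq_addr.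
case: (unpr_or_pri v) nv Pv => [[i ->]|[j ->] _ Pj]; last by exists j.
by rewrite /= leqNgt ltn_ord.
Qed.

Lemma card_unprimed (P : pred 'I_N) :
  #|[pred v : 'I_N | (v < n) && P v]| = #|[pred i : 'I_n | P (unpr m i)]|.
Proof.
rewrite -(card_image (@lshift_inj n m)); apply: eq_card => v; rewrite !inE.
apply/andP/imageP => [[vn Pv]|[i Pi ->]]; last by rewrite /= ltn_ord.
case: (unpr_or_pri v) vn Pv => [[i -> _ Pi]|[j ->]]; first by exists i.
by rewrite /= ltnNge leq_addr.
Qed.

Lemma pos_unpr s i : (pos s (unpr m i) : nat) = i + row s i.
Proof.
rewrite pos_card -(cardID [pred v : 'I_N | v < n]); congr (_ + _).
  rewrite -[RHS](card_ord_ltn (ltnW (ltn_ord i))).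
  rewrite (eq_card (B := [pred v : 'I_N | (v < n) && (pos s v < pos s (unpr m i))])).
    by rewrite card_unprimed; apply: eq_card => i'; rewrite !inE pos_unpr_ltn.
  by move=> v; rewrite !inE andbC.
rewrite (eq_card (B := [pred v : 'I_N | (n <= v) && (pos s v < pos s (unpr m i))])).
  by rewrite card_primed.
by move=> v; rewrite !inE -leqNgt.
Qed.

End Shuffles.

Section Adjacency.
Variables n m : nat.
Local Notation N := (n + m).
Variable s : Shuf n m.

Lemma imm_unpr_pri (i : 'I_n) (j : 'I_m) :
  imm s (unpr m i) (pri n j) <->
  row s i = j /\ forall i' : 'I_n, i' = i.+1 :> nat -> j < row s i'.
Proof.
have neq := @pos_unpr_neq n m s; rewrite immE; split.
  move=> /eqP E; split.
    apply: (@eq_from_ord_ltn m); [|exact: row_leq|exact: ltnW (ltn_ord j)].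
    move=> j'; rewrite -row_ltn; case: (ltnP j' j) => jj'.
      by have := neq i j'; rewrite -(pos_pri_ltn s) in jj'; lia.
    by rewrite -(pos_pri_leq s) in jj'; lia.
  move=> i' Ei'; rewrite -row_ltn.
  have : i < i' by rewrite Ei'.
  by rewrite -(pos_unpr_ltn s) => jj'; have := neq i' j; lia.
case=> Erow above.
have lt_ij : pos s (unpr m i) < pos s (pri n j) by rewrite pos_unpr_pri_ltn Erow.
have succ_lt : (pos s (unpr m i)).+1 < N by apply: leq_ltn_trans (ltn_ord (pos s (pri n j))).
rewrite eqn_leq lt_ij andbT.
case: (pos_surj s succ_lt) => [[x Ex]|[x Ex]].
  have ix : i < x by rewrite -(pos_unpr_ltn s) Ex.
  have hi1 : i.+1 < n by apply: leq_ltn_trans (ltn_ord x).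
  have := above (Ordinal hi1) erefl; rewrite -row_ltn.
  have : pos s (unpr m (Ordinal hi1)) <= pos s (unpr m x) by rewrite pos_unpr_leq.
  have : pos s (unpr m i) < pos s (unpr m (Ordinal hi1)) by rewrite pos_unpr_ltn /=.
  lia.
have : ~~ (x < row s i) by rewrite -row_ltn; lia.
by rewrite Erow -leqNgt -(pos_pri_leq s); lia.
Qed.

Lemma imm_pri_unpr (i : 'I_n) (j : 'I_m) :
  imm s (pri n j) (unpr m i) <->
  row s i = j.+1 /\ forall i' : 'I_n, i'.+1 = i :> nat -> row s i' <= j.
Proof.
have neq := @pos_unpr_neq n m s; rewrite immE; split.
  move=> /eqP E; split.
    apply: (@eq_from_ord_ltn m); [|exact: row_leq|exact: ltn_ord j].
    move=> j'; rewrite -row_ltn ltnS; case: (leqP j' j) => jj'.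
      by rewrite -(pos_pri_leq s) in jj'; lia.
    by have := neq i j'; rewrite -(pos_pri_ltn s) in jj'; lia.
  move=> i' Ei'; rewrite -pos_unpr_pri_ltn.
  have : i' < i by rewrite -Ei'.
  by rewrite -(pos_unpr_ltn s) => jj'; have := neq i' j; lia.
case=> Erow below.
have lt_ji : pos s (pri n j) < pos s (unpr m i) by rewrite row_ltn Erow ltnSn.
have succ_lt : (pos s (pri n j)).+1 < N by apply: leq_ltn_trans (ltn_ord (pos s (unpr m i))).
rewrite eqn_leq lt_ji andbT.
case: (pos_surj s succ_lt) => [[x Ex]|[x Ex]].
  case: (leqP i x) => ix; first by rewrite -(pos_unpr_leq s) in ix; lia.
  have hi1 : i.-1 < n by apply: leq_ltn_trans (ltn_ord i); apply: leq_pred.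
  have Ei1 : (Ordinal hi1).+1 = i :> nat by rewrite /= prednK // (leq_ltn_trans _ ix).
  have := below _ Ei1; rewrite -pos_unpr_pri_ltn.
  have : pos s (unpr m x) <= pos s (unpr m (Ordinal hi1)).
    by rewrite pos_unpr_leq /= -ltnS prednK // (leq_ltn_trans _ ix).
  lia.
have jx : j < x by rewrite -(pos_pri_ltn s); lia.
have : ~~ (pos s (pri n x) < pos s (unpr m i)) by rewrite row_ltn Erow ltnS -ltnNge.
lia.
Qed.

End Adjacency.

Section Diagrams.
Variables n m : nat.
Implicit Types (l : Xt n m) (b : isoroot n m).

Lemma isPartP (s : seq nat) : isPart n m s <->
  [/\ size s = n, forall a, a.+1 < n -> nth 0 s a.+1 <= nth 0 s a
    & forall a, a < n -> nth 0 s a <= m].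
Proof.
split.
  case/andP => [/andP [/eqP sz /(sortedP 0) srt] /(all_nthP 0) bnd].
  by split=> // a ha; [apply: srt|apply: bnd]; rewrite sz.
case=> sz srt bnd; rewrite /isPart sz eqxx /=; apply/andP; split.
  by apply/(sortedP 0) => a; rewrite sz => /srt.
by apply/(all_nthP 0) => a; rewrite sz => /bnd.
Qed.

Lemma size_Xt l : size (val l) = n.
Proof. by case: l => s /= /isPartP []. Qed.

Lemma nth_Xt_leq l k k' : k <= k' -> k' < n -> nth 0 (val l) k' <= nth 0 (val l) k.
Proof.
case: l => s /= /isPartP [_ srt _]; elim: k' => [|k' IH]; first by rewrite leqn0 => /eqP ->.
rewrite leq_eqVlt => /orP [/eqP -> //|kk'] hk'.
exact: leq_trans (srt _ hk') (IH kk' (ltnW hk')).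
Qed.

Lemma nth_Xt_leq_m l a : a < n -> nth 0 (val l) a <= m.
Proof. by case: l => s /= /isPartP [_ _ bnd]; apply: bnd. Qed.

(* The length [lambda_(n-i)] of the row [eps_(i+1)]; row [0] is the bottom one. *)
Definition rowX l (i : 'I_n) := nth 0 (val l) (rev_ord i).

Lemma rowX_mono l (i i' : 'I_n) : i <= i' -> rowX l i <= rowX l i'.
Proof. by move=> ii'; apply: nth_Xt_leq => /=; have := ltn_ord i; have := ltn_ord i'; lia. Qed.

Lemma rowX_leq l i : rowX l i <= m.
Proof. exact: nth_Xt_leq_m. Qed.

Lemma inboxE l i (j : 'I_m) : inbox l i j <-> j < rowX l i.
Proof. by rewrite /inbox /lam /rowX /=; have -> : (n + 1 - i.+1).-1 = n - i.+1 by lia. Qed.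

Lemma rowX_inj l l' : rowX l =1 rowX l' -> l = l'.
Proof.
move=> E; apply: val_inj; apply: (@eq_from_nth _ 0); rewrite !size_Xt // => a ha.
by have := E (rev_ord (Ordinal ha)); rewrite /rowX rev_ordK.
Qed.

Definition setrow l (i : 'I_n) v : Xt n m := insubd l (set_nth 0 (val l) (n - i.+1) v).

Lemma setrow_part l (i : 'I_n) v : v <= m ->
  (forall i' : 'I_n, i' = i.+1 :> nat -> v <= rowX l i') ->
  (forall i' : 'I_n, i'.+1 = i :> nat -> rowX l i' <= v) ->
  isPart n m (set_nth 0 (val l) (n - i.+1) v).
Proof.
move=> vm above below; have lti := ltn_ord i; apply/isPartP; split.
- by rewrite size_set_nth size_Xt; apply/maxn_idPr; lia.
- move=> a ha; rewrite !nth_set_nth /=.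
  case: eqP => E1; case: eqP => E2; try lia.
  + have hb : n - a.+1 < n by lia.
    have := above (Ordinal hb); rewrite /rowX /=.
    have -> : n - (n - a.+1).+1 = a by lia.
    by apply; lia.
  + have hb : n - a.+2 < n by lia.
    have := below (Ordinal hb); rewrite /rowX /=.
    have -> : n - (n - a.+2).+1 = a.+1 by lia.
    by apply; lia.
  + exact: nth_Xt_leq.
- by move=> a ha; rewrite nth_set_nth /=; case: eqP => // _; apply: nth_Xt_leq_m.
Qed.

Lemma rowX_setrow l (i : 'I_n) v i' : isPart n m (set_nth 0 (val l) (n - i.+1) v) ->
  rowX (setrow l i v) i' = if i' == i then v else rowX l i'.
Proof.
move=> hP; rewrite /rowX /setrow insubdK // nth_set_nth /=.
have -> : (n - i'.+1 == n - i.+1) = (i' == i).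
  by apply/eqP/eqP => [E|->//]; apply: ord_inj; have := ltn_ord i; have := ltn_ord i'; lia.
by case: (i' == i).
Qed.

Lemma outerP l (i : 'I_n) (j : 'I_m) : outer l i j <->
  rowX l i = j /\ forall i' : 'I_n, i' = i.+1 :> nat -> j < rowX l i'.
Proof.
split.
  case=> notin [mu Hmu].
  have inmu i' (j' : 'I_m) : j' < rowX mu i' <-> j' < rowX l i' \/ (i' = i /\ j' = j).
    by rewrite -!inboxE.
  have j_mu : j < rowX mu i by apply/inmu; right.
  have le_ij : rowX l i <= j by rewrite leqNgt; apply/negP => /inboxE.
  have Erow : rowX l i = j.
    apply/eqP; rewrite eqn_leq le_ij /= leqNgt.
    apply/negP => lt; have hk : rowX l i < m by apply: ltn_trans lt (ltn_ord j).
    have := (inmu i (Ordinal hk)).1 (ltn_trans lt j_mu).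
    by case=> [/=|[_ E]]; [rewrite ltnn|move: lt; rewrite -E /= ltnn].
  split=> // i' Ei'.
  have le_ii' : i <= i' by rewrite Ei'.
  have := (inmu i' j).1 (leq_trans j_mu (rowX_mono _ le_ii')).
  by case=> [//|[E _]]; move: Ei'; rewrite E; lia.
case=> Erow above; split; first by move/inboxE; rewrite Erow ltnn.
have hP : isPart n m (set_nth 0 (val l) (n - i.+1) j.+1).
  apply: setrow_part => [|i' Ei'|i' Ei']; [exact: ltn_ord j|exact: above|].
  have le_i'i : i' <= i by rewrite -Ei'.
  by apply: leq_trans (rowX_mono l le_i'i) _; rewrite Erow.
exists (setrow l i j.+1) => i' j'; rewrite !inboxE rowX_setrow //.
case: eqP => [->|ne]; last by split=> [?|[//|[E _]]]; [left|case: (ne E)].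
rewrite Erow ltnS leq_eqVlt; split.
  by case/orP => [/eqP E|]; [right; split=> //; apply: ord_inj|left].
by case=> [->|[_ ->]]; rewrite ?eqxx ?orbT.
Qed.

Lemma innerP l (i : 'I_n) (j : 'I_m) : inner l i j <->
  rowX l i = j.+1 /\ forall i' : 'I_n, i'.+1 = i :> nat -> rowX l i' <= j.
Proof.
split.
  case=> /inboxE j_in [mu Hmu].
  have inmu i' (j' : 'I_m) : j' < rowX mu i' <-> j' < rowX l i' /\ ~ (i' = i /\ j' = j).
    by rewrite -!inboxE.
  have j_mu : ~ (j < rowX mu i) by move/inmu => [_ []].
  have Erow : rowX l i = j.+1.
    apply/eqP; rewrite eqn_leq j_in andbT leqNgt; apply/negP => lt.
    have hk : j.+1 < m by apply: leq_trans lt (rowX_leq _ _).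
    apply: j_mu; apply: ltn_trans (_ : Ordinal hk < rowX mu i) => //.
    by apply/inmu; split=> // [[_ E]]; move: (f_equal val E) => /=; lia.
  split=> // i' Ei'; rewrite leqNgt; apply/negP => lt.
  have ne : i' <> i by move=> E; move: Ei'; rewrite E; lia.
  have le_i'i : i' <= i by rewrite -Ei'.
  apply: j_mu; apply: leq_trans (rowX_mono _ le_i'i).
  by apply/inmu; split=> // [[]].
case=> Erow below; split; first by apply/inboxE; rewrite Erow.
have hP : isPart n m (set_nth 0 (val l) (n - i.+1) j).
  apply: setrow_part => [|i' Ei'|//]; first exact: ltnW (ltn_ord j).
  have le_ii' : i <= i' by rewrite Ei'.
  by apply: leq_trans (rowX_mono l le_ii'); rewrite Erow.
exists (setrow l i j) => i' j'; rewrite !inboxE rowX_setrow //.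
case: eqP => [->|ne]; last by split=> [H|[H _] //]; split=> // [[E _]]; apply: ne.
rewrite Erow ltnS; split.
  by move=> lt; split; [exact: ltnW|case=> _ E; move: lt; rewrite E ltnn].
case=> le ne; rewrite ltn_neqAle le andbT; apply/eqP => E; apply: ne; split=> //.
exact: ord_inj.
Qed.

Lemma XaE b l : Xa b l <->
  if rsign b then rowX l (ri b) = rj b /\
                  forall i' : 'I_n, i' = (ri b).+1 :> nat -> rj b < rowX l i'
  else rowX l (ri b) = (rj b).+1 /\
       forall i' : 'I_n, i'.+1 = ri b :> nat -> rowX l i' <= rj b.
Proof. by rewrite /Xa; case: (rsign b); [apply: outerP|apply: innerP]. Qed.

Definition tval b : nat := if rsign b then (rj b).+1 else rj b.

Lemma tX_part b l : Xa b l -> isPart n m (set_nth 0 (val l) (n - (ri b).+1) (tval b)).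
Proof.
move/XaE; rewrite /tval; case: (rsign b) => [[Erow above]|[Erow below]].
  apply: setrow_part => [|i' Ei'|i' Ei']; [exact: ltn_ord|exact: above|].
  have le_i'i : i' <= ri b by rewrite -Ei'.
  by apply: leq_trans (rowX_mono l le_i'i) _; rewrite Erow.
apply: setrow_part => [|i' Ei'|//]; first exact: ltnW (ltn_ord _).
have le_ii' : ri b <= i' by rewrite Ei'.
by apply: leq_trans (rowX_mono l le_ii'); rewrite Erow.
Qed.

Lemma rowX_tX b l i' : Xa b l ->
  rowX (tX b l) i' = if i' == ri b then tval b else rowX l i'.
Proof. by move/tX_part; apply: rowX_setrow. Qed.

Lemma Xa_ropp_tX b l : Xa b l -> Xa (ropp b) (tX b l).
Proof.
move=> hX; have rowT i' := rowX_tX i' hX.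
move/XaE: (hX) => hE; apply/XaE; rewrite /ropp /=.
move: hE rowT; rewrite /tval; case: (rsign b) => /= [[Erow above]|[Erow below]] rowT.
  split=> [|i' Ei']; first by rewrite rowT eqxx.
  rewrite rowT; case: eqP => [E|_]; first by move: Ei'; rewrite E; lia.
  by rewrite -Erow; apply: rowX_mono; rewrite -Ei'.
split=> [|i' Ei']; first by rewrite rowT eqxx.
rewrite rowT; case: eqP => [E|_]; first by move: Ei'; rewrite E; lia.
by rewrite -ltnS -Erow; apply: rowX_mono; rewrite Ei'.
Qed.

Lemma tX_roppK b l : Xa b l -> tX (ropp b) (tX b l) = l.
Proof.
move=> hX; apply: rowX_inj => i'.
rewrite (rowX_tX _ (Xa_ropp_tX hX)) (rowX_tX _ hX) /=.
case: eqP => [->|//]; move/XaE: hX; rewrite /tval /ropp /=.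
by case: (rsign b) => /= [[-> _]|[-> _]].
Qed.

End Diagrams.

Section DiagramShift.
Variables n m : nat.
Hypothesis n_gt0 : 0 < n.
Implicit Types l : Xt n m.

Lemma Xbar_part l : isPart n m (rcons (behead (val l)) 0).
Proof.
apply/isPartP; split.
- by rewrite size_rcons size_behead size_Xt prednK.
- move=> a ha; rewrite !nth_rcons size_behead size_Xt !nth_behead.
  case: ltnP => h1; case: ltnP => h2 //; try lia.
    by apply: nth_Xt_leq; lia.
  by case: eqP.
- move=> a ha; rewrite nth_rcons size_behead size_Xt nth_behead.
  by case: ltnP => h1; [apply: nth_Xt_leq_m; lia|case: eqP].
Qed.

Lemma rowX_Xbar l (i : 'I_n) :
  rowX (Xbar l) i = if (i : nat) == 0 then 0 else rowX l (ord_pred i).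
Proof.
rewrite /rowX /Xbar insubdK; last exact: Xbar_part.
rewrite nth_rcons size_behead size_Xt nth_behead /=.
have lti := ltn_ord i; have [->|ne] := eqVneq (i : nat) 0; first by rewrite subn1 ltnn if_same.
have -> : (i + n).-1 %% n = i.-1 := ord_pred_val ne.
by rewrite ifT; [congr nth; lia|lia].
Qed.

End DiagramShift.

Section Zeta.
Variables n m : nat.
Implicit Types (s : Shuf n m) (b : isoroot n m).

Lemma nth_zetaseq s (i : 'I_n) : nth 0 (zetaseq s) (rev_ord i) = row s i.
Proof.
rewrite /zetaseq (nth_map 0) ?size_iota ?ltn_ord // nth_iota ?ltn_ord // add0n.
have -> : n - (rev_ord i).+1 = i by rewrite /= subnSK ?ltn_ord // subKn // ltnW.
rewrite card_primed /row; apply: eq_card => j; rewrite !inE -beforeE.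
by apply/existsP/existsP => [[p /existsP [q]]|[p /existsP [q]]];
  exists p; apply/existsP; exists q; rewrite -?val_eqE.
Qed.

Lemma zeta_part s : isPart n m (zetaseq s).
Proof.
have nthE a (ha : a < n) : nth 0 (zetaseq s) a = row s (rev_ord (Ordinal ha)).
  by rewrite -nth_zetaseq rev_ordK.
apply/isPartP; split=> [|a ha|a ha]; first by rewrite size_map size_iota.
  by rewrite !nthE ?(ltnW ha) // => ?; apply: row_mono => /=; rewrite leq_sub2l.
by rewrite nthE; apply: row_leq.
Qed.

Lemma rowX_zeta s i : rowX (zeta s) i = row s i.
Proof. by rewrite /rowX /zeta insubdK ?nth_zetaseq //; apply: zeta_part. Qed.

Lemma zeta_inj : injective (@zeta n m).
Proof.
move=> s s' E; apply/before_inj/before_rows => i.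
by rewrite -!rowX_zeta E.
Qed.

Lemma Ba_Xa b s : Ba b s <-> Xa b (zeta s).
Proof.
rewrite XaE /Ba /Xa; case: (rsign b); rewrite ?imm_unpr_pri ?imm_pri_unpr;
  by split=> -[E H]; split=> [|i' /H]; rewrite ?rowX_zeta // -rowX_zeta.
Qed.

End Zeta.

Section Swap.
Variables n m : nat.
Local Notation N := (n + m).
Implicit Types (s : Shuf n m) (b : isoroot n m).

Definition adjacent s (x y : 'I_N) :=
  (pos s y : nat) = (pos s x).+1 \/ (pos s x : nat) = (pos s y).+1.

Lemma adjacentC s x y : adjacent s x y -> adjacent s y x.
Proof. by case; [right|left]. Qed.

Lemma Ba_adjacent b s : Ba b s -> adjacent s (unpr m (ri b)) (pri n (rj b)).
Proof. by rewrite /Ba; case: (rsign b); rewrite immE => /eqP E; [left|right]. Qed.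

Lemma pos_tperm_ltn s x y z w : adjacent s x y -> x != w -> y != w ->
  ((pos s (tperm x y z) < pos s w) = (pos s z < pos s w)) /\
  ((pos s w < pos s (tperm x y z)) = (pos s w < pos s z)).
Proof.
move=> xy xw yw.
have nx : (pos s w : nat) != pos s x by rewrite val_eqE (inj_eq (@pos_inj _ _ s)) eq_sym.
have ny : (pos s w : nat) != pos s y by rewrite val_eqE (inj_eq (@pos_inj _ _ s)) eq_sym.
case: tpermP => [->|->|//]; [move: xy|move/adjacentC: xy]; rewrite /adjacent;
  by split; apply/idP/idP; lia.
Qed.

Definition swap_pos b s v := pos s (tperm (unpr m (ri b)) (pri n (rj b)) v).

Lemma swap_pos_ltn b s u v :
  Ba b s -> sametype u v -> u < v -> swap_pos b s u < swap_pos b s v.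
Proof.
move=> /Ba_adjacent xy st uv; rewrite /swap_pos.
move: xy (sametype_unpr_pri (ri b) (rj b)).
move: (unpr m (ri b)) (pri n (rj b)) => x y xy st_xy.
have uvpos : pos s u < pos s v by rewrite pos_ltn.
case: (boolP ((x != v) && (y != v))) => [/andP [xv yv]|].
  by rewrite (tpermD xv yv) (pos_tperm_ltn u xy xv yv).1.
rewrite negb_and !negbK => xyv; have [xu yu] : x != u /\ y != u.
  split; apply/negP => /eqP E; move: xyv st uv; rewrite -E => /orP [] /eqP <-;
    by rewrite ?ltnn ?st_xy // sametypeC st_xy.
by rewrite (tpermD xu yu) (pos_tperm_ltn v xy xu yu).2.
Qed.

Definition swap_ffun b s : {ffun 'I_N -> 'I_N} :=
  [ffun p => tperm (unpr m (ri b)) (pri n (rj b)) (val s p)].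

Lemma pos_swapS b s : Ba b s -> forall v, pos (swapS b s) v = swap_pos b s v.
Proof.
move=> hB v; have swapK p : swap_pos b s (swap_ffun b s p) = p :> nat.
  by rewrite ffunE /swap_pos tpermK shufK.
have hS := isShuffle_of_pos swapK (fun u v => @swap_pos_ltn b s u v hB).
apply: ord_inj; apply: (pos_of_cancel (h := fun u => nat_of_ord (swap_pos b s u))) => p.
by rewrite /swapS insubdK.
Qed.

Lemma row_swapS b s i : Ba b s ->
  row (swapS b s) i = if i == ri b then tval b else row s i.
Proof.
move=> hB; have xy := Ba_adjacent hB.
case: eqP => [->|/eqP ne].
  have hB' := hB; move: hB'; rewrite /Ba /tval; case: (rsign b) => hB'.
    apply: (proj1 ((imm_pri_unpr (swapS b s) _ _).1 _)).
    by rewrite immE !pos_swapS // /swap_pos tpermL tpermR -immE.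
  apply: (proj1 ((imm_unpr_pri (swapS b s) _ _).1 _)).
  by rewrite immE !pos_swapS // /swap_pos tpermL tpermR -immE.
rewrite /row; apply: eq_card => j; rewrite !inE !pos_swapS // /swap_pos.
have xi : unpr m (ri b) != unpr m i by rewrite -val_eqE /= eq_sym.
have yi : pri n (rj b) != unpr m i by rewrite eq_sym unpr_neq_pri.
by rewrite (tpermD xi yi) (pos_tperm_ltn _ xy xi yi).1.
Qed.

Lemma zeta_swapS b s : Ba b s -> zeta (swapS b s) = tX b (zeta s).
Proof.
move=> hB; apply: rowX_inj => i.
by rewrite rowX_zeta row_swapS // rowX_tX -?Ba_Xa // rowX_zeta.
Qed.

End Swap.

Section Sbar.
Variables n m : nat.
Hypothesis n_gt0 : 0 < n.
Local Notation N := (n + m).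
Implicit Types (s : Shuf n m) (l : Xt n m).

Definition ilast : 'I_n := Ordinal (etrans (ltn_predL n) n_gt0 : n.-1 < n).

Lemma lastn_pos s : lastn s <-> pos s (unpr m ilast) = N.-1 :> nat.
Proof.
split=> [/existsP [p /andP [/eqP Ep /eqP Ev]]|E].
  by rewrite -Ep -(shufK s p); congr (nat_of_ord (pos s _)); apply: val_inj.
apply/existsP; exists (pos s (unpr m ilast)).
by rewrite posK -[val _]/(nat_of_ord _) E !eqxx.
Qed.

Lemma lastn_row s : lastn s <-> row s ilast = m.
Proof. by rewrite lastn_pos pos_unpr /=; split=> [|->]; lia. Qed.

Definition sbar_ffun s : {ffun 'I_N -> 'I_N} :=
  [ffun p => if val p == 0 then p else nuinvI (val s (Ordinal (pred_ord_lt p)))].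

(* The position of [v] in [sbar s]: the letter [1] comes first and every other
   letter moves one place to the right, after renaming by [nu^-1]. *)
Definition sbar_pos s (v : 'I_N) : nat :=
  match split v with
  | inl i => if (i : nat) == 0 then 0 else (pos s (unpr m (ord_pred i))).+1
  | inr j => (pos s (pri n j)).+1
  end.

Lemma sbar_pos_unpr s i :
  sbar_pos s (unpr m i) = if (i : nat) == 0 then 0 else (pos s (unpr m (ord_pred i))).+1.
Proof. by rewrite /sbar_pos (unsplitK (inl i)). Qed.

Lemma sbar_pos_pri s j : sbar_pos s (pri n j) = (pos s (pri n j)).+1.
Proof. by rewrite /sbar_pos (unsplitK (inr j)). Qed.

Lemma sbar_pos_ltn s u v : sametype u v -> u < v -> sbar_pos s u < sbar_pos s v.
Proof.
case: (unpr_or_pri u) => [[a ->]|[a ->]]; case: (unpr_or_pri v) => [[b ->]|[b ->]];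
  rewrite ?sametype_unpr_pri 1?sametypeC ?sametype_unpr_pri // => _ /= ab.
  rewrite !sbar_pos_unpr; case: eqP => a0; case: eqP => b0 //; try lia.
  by rewrite ltnS pos_unpr_ltn !ord_pred_val; [lia|apply/eqP..].
by rewrite !sbar_pos_pri ltnS pos_pri_ltn -(ltn_add2l n).
Qed.

Lemma sbar_ffunK s : lastn s -> forall p, sbar_pos s (sbar_ffun s p) = p.
Proof.
move=> /lastn_pos last p; rewrite ffunE.
have [p0|p0] := eqVneq (p : nat) 0.
  case: (unpr_or_pri p) p0 => [[i ->] /= i0|[j ->] /=]; last by lia.
  by rewrite sbar_pos_unpr i0.
have ltp := ltn_ord p; set q := Ordinal _; have Eq : (q : nat) = p.-1 by [].
case: (unpr_or_pri (val s q)) => [[i Ei]|[j Ej]].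
  have Pi : (pos s (unpr m i) : nat) = q by rewrite -Ei shufK.
  have lti1 : i.+1 < n.
    rewrite ltn_neqAle ltn_ord andbT; apply/eqP => Ei1.
    have Eil : i = ilast by apply: val_inj => /=; lia.
    by move: Pi; rewrite Eil last Eq; lia.
  rewrite Ei /nuinvI (unsplitK (inl i)) sbar_pos_unpr ordSK /= modn_small //.
  by rewrite Pi Eq /=; lia.
have Pj : (pos s (pri n j) : nat) = q by rewrite -Ej shufK.
by rewrite Ej /nuinvI (unsplitK (inr j)) sbar_pos_pri Pj Eq; lia.
Qed.

Lemma pos_sbar s : lastn s -> forall v, pos (sbar s) v = sbar_pos s v :> nat.
Proof.
move=> hl; have hS := isShuffle_of_pos (sbar_ffunK hl) (@sbar_pos_ltn s).
by apply: pos_of_cancel => p; rewrite /sbar insubdK // sbar_ffunK.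
Qed.

Lemma row_sbar s i : lastn s ->
  row (sbar s) i = if (i : nat) == 0 then 0 else row s (ord_pred i).
Proof.
move=> hl; have := pos_unpr (sbar s) i; rewrite pos_sbar // sbar_pos_unpr.
case: eqP => [|/eqP i0]; first by lia.
by rewrite pos_unpr ord_pred_val //; lia.
Qed.

Lemma zeta_sbar s : lastn s -> zeta (sbar s) = Xbar (zeta s).
Proof.
by move=> hl; apply: rowX_inj => i; rewrite rowX_zeta row_sbar // rowX_Xbar // rowX_zeta.
Qed.

Lemma top_rowX l : lam (val l) 1 = rowX l ilast.
Proof. by rewrite /lam /rowX /=; have -> : n - n.-1.+1 = 0 by lia. Qed.

Lemma lastn_zeta s : lastn s <-> lam (val (zeta s)) 1 = m.
Proof. by rewrite top_rowX rowX_zeta lastn_row. Qed.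

End Sbar.

Section ZetaBij.
Variables n m : nat.
Local Notation N := (n + m).
Implicit Types (s : Shuf n m) (l : Xt n m) (b : isoroot n m).

Lemma borel_delta s (u v : 'I_N) : borel s (delta_mx u v) = (u == v) || before s u v.
Proof.
apply/forallP/idP => [/(_ u)/forallP/(_ v)|uv u']; first by rewrite mxE !eqxx oner_neq0.
apply/forallP => v'; rewrite mxE.
by case: (eqVneq u' u) => [->|ne1]; case: (eqVneq v' v) => [->|ne2];
  rewrite ?eqxx ?(negbTE ne1) ?(negbTE ne2) /= ?eqxx ?uv ?implybT.
Qed.

Lemma bo_inj : injective (@bo n m).
Proof.
move=> s s' /(f_equal (@proj1_sig _ _)) /= E; apply: before_inj => u v.
have [->|uv] := eqVneq u v; first by rewrite !beforeE !ltnn.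
by have := f_equal (fun f => f (delta_mx u v)) E; rewrite !borel_delta (negbTE uv) /= => ->.
Qed.

Lemma id_isShuffle : isShuffle ([ffun p => p] : {ffun 'I_N -> 'I_N}).
Proof. by apply: (isShuffle_of_pos (h := @nat_of_ord N)) => [p|//]; rewrite ffunE. Qed.

Definition shuf_id : Shuf n m := exist (@isShuffle n m) _ id_isShuffle.

Lemma row_shuf_id i : row shuf_id i = 0.
Proof.
have posE v : pos shuf_id v = v :> nat by apply: pos_of_cancel => p; rewrite /= ffunE.
apply: eq_card0 => j; rewrite inE !posE /=.
by apply/negbTE; rewrite -leqNgt (leq_trans (ltnW (ltn_ord i))) // leq_addr.
Qed.

Definition weight l := \sum_(i < n) rowX l i.

Lemma weight_eq0 l : weight l = 0 -> forall i, rowX l i = 0.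
Proof. by move/eqP; rewrite sum_nat_eq0 => /forallP H i; apply/eqP; apply: H. Qed.

Lemma weight_tX b l : Xa b l -> rsign b = false -> (weight (tX b l)).+1 = weight l.
Proof.
move=> hX sb; rewrite /weight (bigD1 (ri b)) //= [in RHS](bigD1 (ri b)) //=.
rewrite rowX_tX // eqxx /tval sb.
move/XaE: (hX); rewrite sb => -[-> _]; rewrite addSn; congr (_ + _).+1.
by apply: eq_bigr => i /negbTE ne; rewrite rowX_tX // ne.
Qed.

Lemma removable_box l : 0 < weight l -> exists b, rsign b = false /\ Xa b l.
Proof.
move=> wl; case: (pickP (fun i => 0 < rowX l i)) => [i0 hi0|none]; last first.
  suff : weight l = 0 by move=> E; rewrite E in wl.
  apply/eqP; rewrite sum_nat_eq0; apply/forallP => i.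
  by have := none i; rewrite lt0n => /negbFE.
(* the last box of the lowest nonempty row *)
case: (@arg_minnP _ i0 (fun i => 0 < rowX l i) (@nat_of_ord n) hi0) => i hi imin.
have hj : (rowX l i).-1 < m by rewrite prednK // rowX_leq.
exists (Root false i (Ordinal hj)); split=> //; apply/XaE => /=; split; first by rewrite prednK.
move=> i' Ei'; rewrite leqNgt; apply/negP => lt.
by have := imin i' (leq_ltn_trans (leq0n _) lt); rewrite -Ei' ltnn.
Qed.

Lemma zeta_surj l : exists s, zeta s = l.
Proof.
elim: {l}(weight l) {-2}l (erefl (weight l)) => [|k IH] l wl.
  by exists shuf_id; apply: rowX_inj => i; rewrite rowX_zeta row_shuf_id weight_eq0.
have [b [sb hX]] : exists b, rsign b = false /\ Xa b l by apply: removable_box; rewrite wl.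
have [s Es] : exists s, zeta s = tX b l by apply: IH; apply/eq_add_S; rewrite weight_tX.
have hB : Ba (ropp b) s by apply/Ba_Xa; rewrite Es; apply: Xa_ropp_tX.
by exists (swapS (ropp b) s); rewrite zeta_swapS // Es tX_roppK.
Qed.

End ZetaBij.

Section Roots.
Variables n m : nat.
Implicit Types b : isoroot n m.

Lemma nu_ropp b : nu (ropp b) = ropp (nu b). Proof. by case: b. Qed.
Lemma nuinv_ropp b : nuinv (ropp b) = ropp (nuinv b). Proof. by case: b. Qed.
Lemma nuinvK b : nu (nuinv b) = b. Proof. by case: b => s i j; rewrite /nu /nuinv /= ord_predK. Qed.

Lemma nupow_ropp (k : int) b : nupow k (ropp b) = ropp (nupow k b).
Proof.
by case: k => k /=; elim: k => [|k IH] //=; rewrite ?nu_ropp ?nuinv_ropp // IH ?nu_ropp ?nuinv_ropp.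
Qed.

Lemma nupowS (k : int) b : nupow (k + 1) b = nu (nupow k b).
Proof.
case: k => [k|[|k]]; first by rewrite -PoszD addn1.
  by rewrite /= nuinvK.
have -> : (Negz k.+1 + 1)%R = Negz k by rewrite !NegzE; lia.
by rewrite /= nuinvK.
Qed.

Lemma tval_nu b : tval (nu b) = tval b. Proof. by []. Qed.

End Roots.

Section Shift.
Variables n m : nat.
Hypothesis n_gt0 : 0 < n.
Implicit Types (l : Xt n m) (b : isoroot n m) (x : Xt n m * int).
Local Notation ilast := (ilast n_gt0).

Lemma ordS_ilast : (ordS ilast : nat) = 0.
Proof. by rewrite /= prednK // modnn. Qed.

Lemma ltn_ilast (i : 'I_n) : i != ilast -> i.+1 < n.
Proof. by rewrite -val_eqE /= => ne; have := ltn_ord i; lia. Qed.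

Lemma Xa_top_row l b : 0 < m -> rowX l ilast = m -> Xa b l -> ri b = ilast ->
  rowX (Xbar l) ilast != m /\ ~ Xa (nu b) (Xbar l).
Proof.
move=> m_gt0 top /XaE hX ri_last; move: hX; rewrite ri_last top.
case hs: (rsign b); case=> E below; first by have := ltn_ord (rj b); lia.
split.
  rewrite rowX_Xbar //; case: ifP => [_|/negbT ne]; first by rewrite eq_sym -lt0n.
  have := below (ord_pred ilast); rewrite ord_pred_val //= prednK; last by rewrite lt0n.
  by move=> /(_ erefl); lia.
move/XaE; rewrite /= hs ri_last rowX_Xbar // ordS_ilast eqxx.
by case.
Qed.

Lemma rowX_Xbar_ordS l i : i != ilast -> rowX (Xbar l) (ordS i) = rowX l i.
Proof. by move=> ne; rewrite rowX_Xbar // ordS_val ?ltn_ilast // ordSK. Qed.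

Lemma Xa_shift l b : rowX l ilast = m -> Xa b l -> ri b != ilast ->
  [/\ Xa (nu b) (Xbar l), rowX (tX b l) ilast = m & Xbar (tX b l) = tX (nu b) (Xbar l)].
Proof.
move=> top hX ne; have Si : (ri b).+1 %% n = (ri b).+1 := ordS_val (ltn_ilast ne).
have hXn : Xa (nu b) (Xbar l).
  apply/XaE; move/XaE: hX; rewrite /= rowX_Xbar_ordS //.
  case: (rsign b) => -[E H]; split=> // i' Ei'; rewrite rowX_Xbar //.
    have i'0 : (i' : nat) != 0 by rewrite Ei'.
    by rewrite (negbTE i'0); apply: H; rewrite ord_pred_val // Ei' /= Si.
  case: ifP => // /negbT i'0; apply: H.
  by rewrite ord_pred_val // prednK ?lt0n //; apply: succn_inj; rewrite Ei' Si.
split=> //; first by rewrite rowX_tX // ifN // eq_sym.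
apply: rowX_inj => i'; rewrite rowX_Xbar // !rowX_tX // rowX_Xbar // tval_nu.
have -> : (ord_pred i' == ri b) = (i' == ri (nu b)).
  by rewrite -(inj_eq (@ordS_inj n)) ord_predK.
by case: (eqVneq i' (ri (nu b))) => [->|//]; rewrite /= Si.
Qed.

Definition full_top x : bool := lam (val x.1) 1 == m.
Definition shiftXZ x := (Xbar x.1, (x.2 + 1)%R).
Definition tXZ (a : isoroot n m) x := (tX (nupow x.2 a) x.1, x.2).

Lemma full_topE x : full_top x = (rowX x.1 ilast == m).
Proof. by rewrite /full_top top_rowX. Qed.

Lemma stepX_graph x y : stepX x y <-> full_top x /\ y = shiftXZ x.
Proof. by split=> [[/eqP top ->]|[/eqP top ->]]. Qed.

Lemma shiftXZ_inj x y : full_top x -> full_top y -> shiftXZ x = shiftXZ y -> x = y.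
Proof.
case: x y => [l k] [l' k']; rewrite !full_topE => /eqP top /eqP top' [El /addIr ->].
congr (_, _); apply: rowX_inj => i; have [->|ne] := eqVneq i ilast; first by rewrite top top'.
by rewrite -!(rowX_Xbar_ordS _ ne) El.
Qed.

Lemma XZeq_tXZ a x y : 0 < m -> Xa (nupow x.2 a) x.1 -> Xa (nupow y.2 a) y.1 ->
  XZeq x y -> XZeq (tXZ a x) (tXZ a y).
Proof.
move=> m_gt0.
apply: (rst_map stepX_graph shiftXZ_inj (A := fun x => Xa (nupow x.2 a) x.1))
  => {x y} [[l k]|[l k]]; rewrite !full_topE /= nupowS => /eqP top.
  move=> hX hXn; have [E|ne] := eqVneq (ri (nupow k a)) ilast.
    by have [_ []] := Xa_top_row m_gt0 top hX E.
  have [_ top' E] := Xa_shift top hX ne.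
  by apply/stepX_graph; rewrite full_topE top' /tXZ /shiftXZ /= nupowS E.
move=> /eqP top' hX; have [E|ne] := eqVneq (ri (nupow k a)) ilast.
  by have [] := Xa_top_row m_gt0 top hX E; rewrite top' eqxx.
by have [] := Xa_shift top hX ne.
Qed.

End Shift.

Section Functors.
Variables n m : nat.
Hypotheses (n_gt0 : 0 < n) (m_gt0 : 0 < m).
Implicit Types (a : isoroot n m) (s : Shuf n m) (l : Xt n m).

Lemma clsX_eq (x y : Xt n m * int) : XZeq x y -> clsX x = clsX y.
Proof. by move=> xy; apply: (img_of_eq (f := @XZeq n m)); apply: rst_class. Qed.

Lemma clsX_inj (x y : Xt n m * int) : clsX x = clsX y -> XZeq x y.
Proof. by move/(eq_img_of (f := @XZeq n m)) => ->; apply: rst_refl. Qed.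

Lemma clsB_eq (x y : Bor n m * int) : BZeq x y -> clsB x = clsB y.
Proof. by move=> xy; apply: (img_of_eq (f := @BZeq n m)); apply: rst_class. Qed.

Lemma clsB_inj (x y : Bor n m * int) : clsB x = clsB y -> BZeq x y.
Proof. by move/(eq_img_of (f := @BZeq n m)) => ->; apply: rst_refl. Qed.

Definition zinv l : Shuf n m :=
  proj1_sig (constructive_indefinite_description _ (zeta_surj l)).

Lemma zinvK l : zeta (zinv l) = l.
Proof. by rewrite /zinv; case: constructive_indefinite_description. Qed.

Lemma zetaK s : zinv (zeta s) = s.
Proof. by apply: zeta_inj; rewrite zinvK. Qed.

Definition bsel (b : Bor n m) : Shuf n m := img_pick b.

Lemma bselK b : bo (bsel b) = b. Proof. exact: img_pickK. Qed.

Lemma boK s : bsel (bo s) = s. Proof. by apply: bo_inj; rewrite bselK. Qed.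

Definition XtoB (x : Xt n m * int) := (bo (zinv x.1), x.2).
Definition BtoX (y : Bor n m * int) := (zeta (bsel y.1), y.2).

Lemma XZeq_BZeq x y : XZeq x y -> BZeq (XtoB x) (XtoB y).
Proof.
elim=> {x y} [x y [top ->]|x|x y _|x y z _ xy _ yz]; last exact: (rst_trans _ _ _ _ _ xy yz).
- have hl : lastn (zinv x.1) by apply/(lastn_zeta n_gt0); rewrite zinvK.
  apply: rst_step; exists (zinv x.1); split=> //; split=> //=.
  by congr (bo _, _); apply: zeta_inj; rewrite zinvK zeta_sbar // zinvK.
- exact: rst_refl.
- exact: rst_sym.
Qed.

Lemma BZeq_XZeq x y : BZeq x y -> XZeq (BtoX x) (BtoX y).
Proof.
elim=> {x y} [x y [s [hl [Ex ->]]]|x|x y _|x y z _ xy _ yz];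
  last exact: (rst_trans _ _ _ _ _ xy yz).
- rewrite /BtoX /= Ex !boK; apply: rst_step; split; first exact/(lastn_zeta n_gt0).
  by rewrite zeta_sbar.
- exact: rst_refl.
- exact: rst_sym.
Qed.

Definition repX (q : QX n m) : Xt n m * int := img_pick q.
Definition repB (q : QB n m) : Bor n m * int := img_pick q.

Definition phi q := clsB (XtoB (repX q)).
Definition psi q := clsX (BtoX (repB q)).

Lemma phi_clsX x : phi (clsX x) = clsB (XtoB x).
Proof.
apply/clsB_eq/XZeq_BZeq/clsX_inj.
exact: (img_pickK (f := @XZeq n m)).
Qed.

Lemma psi_clsB y : psi (clsB y) = clsX (BtoX y).
Proof.
apply/clsX_eq/BZeq_XZeq/clsB_inj.
exact: (img_pickK (f := @BZeq n m)).
Qed.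

Lemma phiK : cancel phi psi.
Proof.
move=> q; rewrite -[q](img_pickK (f := @XZeq n m)) -/(clsX _) phi_clsX psi_clsB.
by rewrite /BtoX /= boK zinvK -surjective_pairing.
Qed.

Lemma psiK : cancel psi phi.
Proof.
move=> q; rewrite -[q](img_pickK (f := @BZeq n m)) -/(clsB _) psi_clsB phi_clsX.
by rewrite /XtoB /= zetaK bselK -surjective_pairing.
Qed.

Lemma phi_bij : bijective phi.
Proof. exact: Bijective phiK psiK. Qed.

Lemma phi_zeta s (k : int) : phi (clsX (zeta s, k)) = clsB (bo s, k).
Proof. by rewrite phi_clsX /XtoB /= zetaK. Qed.


Definition Fo a (q : QX n m) : Prop :=
  exists (j : int) l, Xa (nupow j a) l /\ q = clsX (l, j).

(* Off [Fo a] the value of [Fm a] is irrelevant; it is the identity there. *)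
Definition Fm a (q : QX n m) : QX n m :=
  match excluded_middle_informative
          (exists x : Xt n m * int, Xa (nupow x.2 a) x.1 /\ q = clsX x) with
  | left ex => clsX (tXZ a (proj1_sig (constructive_indefinite_description _ ex)))
  | right _ => q
  end.

Lemma Fm_clsX a (j : int) l :
  Xa (nupow j a) l -> Fm a (clsX (l, j)) = clsX (tX (nupow j a) l, j).
Proof.
move=> hX; rewrite /Fm; case: excluded_middle_informative => [ex|[]]; last by exists (l, j).
case: constructive_indefinite_description => x [hx /clsX_inj xl] /=.
by apply: clsX_eq; apply: (XZeq_tXZ n_gt0 (y := (l, j)) m_gt0 hx hX); apply: rst_sym.
Qed.

Lemma Fo_ropp a q : Fo a q -> Fo (ropp a) (Fm a q).
Proof.
case=> j [l [hX ->]]; rewrite Fm_clsX //.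
by exists j, (tX (nupow j a) l); rewrite nupow_ropp; split=> //; apply: Xa_ropp_tX.
Qed.

Lemma Fm_roppK a q : Fo a q -> Fm (ropp a) (Fm a q) = q.
Proof.
case=> j [l [hX ->]]; rewrite Fm_clsX // Fm_clsX nupow_ropp ?tX_roppK //.
exact: Xa_ropp_tX.
Qed.

Definition Bo a (q : QB n m) : Prop :=
  exists (j : int) s, Ba (nupow j a) s /\ q = clsB (bo s, j).

Definition Bm a (q : QB n m) : QB n m := phi (Fm a (psi q)).

Lemma Fo_phi a q : Fo a q <-> Bo a (phi q).
Proof.
split=> [[j [l [hX ->]]]|[j [s [hB Eq]]]].
  exists j, (zinv l); rewrite phi_clsX; split=> //.
  by apply/Ba_Xa; rewrite zinvK.
exists j, (zeta s); split; first exact/Ba_Xa.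
by rewrite -[q]phiK Eq psi_clsB /BtoX /= boK.
Qed.

Lemma Bo_psi a q : Bo a q <-> Fo a (psi q).
Proof. by rewrite Fo_phi psiK. Qed.

Lemma Bm_clsB a (j : int) s : Ba (nupow j a) s ->
  Bm a (clsB (bo s, j)) = clsB (bo (swapS (nupow j a) s), j).
Proof.
move=> hB; rewrite /Bm psi_clsB /BtoX /= boK Fm_clsX -?Ba_Xa // phi_clsX /XtoB /=.
by rewrite -zeta_swapS // zetaK.
Qed.

Lemma Bo_ropp a q : Bo a q -> Bo (ropp a) (Bm a q).
Proof. by rewrite /Bm !Bo_psi phiK; apply: Fo_ropp. Qed.

Lemma Bm_roppK a q : Bo a q -> Bm (ropp a) (Bm a q) = q.
Proof. by rewrite Bo_psi /Bm phiK => /Fm_roppK ->; rewrite psiK. Qed.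

Lemma phi_Fm a q : phi (Fm a q) = Bm a (phi q).
Proof. by rewrite /Bm phiK. Qed.

End Functors.

Theorem corollary3p7 (n m : nat) (Hn : (0 < n)%N) (Hnm : (n < m)%N) :
  exists (Fo : isoroot n m -> QX n m -> Prop) (Fm : isoroot n m -> QX n m -> QX n m)
         (Bo : isoroot n m -> QB n m -> Prop) (Bm : isoroot n m -> QB n m -> QB n m)
         (phi : QX n m -> QB n m),
  (* (a) *)
  (forall a q, Fo a q <->
     exists (j : int) (l : Xt n m), Xa (nupow j a) l /\ q = clsX (l, j)) /\
  (forall a (j : int) (l : Xt n m), Xa (nupow j a) l ->
     Fm a (clsX (l, j)) = clsX (tX (nupow j a) l, j)) /\
  (forall a q, Fo a q -> Fo (ropp a) (Fm a q)) /\
  (forall a q, Fo a q -> Fm (ropp a) (Fm a q) = q) /\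
  (* (b) *)
  (forall a q, Bo a q <->
     exists (j : int) (s : Shuf n m), Ba (nupow j a) s /\ q = clsB (bo s, j)) /\
  (forall a (j : int) (s : Shuf n m), Ba (nupow j a) s ->
     Bm a (clsB (bo s, j)) = clsB (bo (swapS (nupow j a) s), j)) /\
  (forall a q, Bo a q -> Bo (ropp a) (Bm a q)) /\
  (forall a q, Bo a q -> Bm (ropp a) (Bm a q) = q) /\
  (* (c) *)
  (forall (s : Shuf n m) (k : int), phi (clsX (zeta s, k)) = clsB (bo s, k)) /\
  bijective phi /\
  (forall a q, Fo a q <-> Bo a (phi q)) /\
  (forall a q, Fo a q -> phi (Fm a q) = Bm a (phi q)).
Proof.
have m_gt0 : 0 < m := leq_ltn_trans (leq0n n) Hnm.
exists (@Fo n m), (@Fm n m), (@Bo n m), (@Bm n m), (@phi n m).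
split=> //; split; first exact: (Fm_clsX Hn m_gt0).
split; first exact: (Fo_ropp Hn m_gt0).
split; first exact: (Fm_roppK Hn m_gt0).
split=> //; split; first exact: (Bm_clsB Hn m_gt0).
split; first exact: (Bo_ropp Hn m_gt0).
split; first exact: (Bm_roppK Hn m_gt0).
split; first exact: (phi_zeta Hn).
split; first exact: (phi_bij m Hn).
by split=> [a q|a q _]; [apply: (Fo_phi Hn)|apply: (phi_Fm Hn)].
Qed.
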